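(* Let $3\le a<b$ be integers and for $z\in(0,1)$, $z\ne z_r$, let $h(z)=\dfrac{a z^{a-b}-b-f(z)\big(a(a-1)z^{a-b}-b(b-1)\big)}{b\big((b-1)f(z)-1\big)}$. Then: (i) $h$ has a pole at $z=z_r$ (its denominator vanishes in $(0,1)$ exactly at $z_r$); (ii) $\lim_{z\to0}h(z)=-\infty$; (iii) $\lim_{z\to z_r}h(z)=+\infty$; (iv) $h(z)\in(-\infty,1]$ for all $z\in(0,z_l]$; (v) $h(z)\in(1,+\infty)$ for all $z\in(z_l,z_r)$, and $h(z_l)=1$; (vi) $h(z)\in(-\infty,1)$ for all $z\in(z_r,1)$; (vii) for $z\in(0,1)\setminus\{z_r\}$: $\frac{\partial h}{\partial z}(z)>0 \iff g(z)>0$; (viii) $h$ is strictly increasing on $(0,z_l]$; (ix) $h$ is strictly increasing on $(z_r,1)$; (x) if $\min_z g(z)\ge0$, then $h$ is strictly increasing on $[z_l,z_r)$; (xi) if $\min_z g(z)<0$, then on $[z_l,z_r)$ the function $h$ is strictly increasing up to a local maximum at $z_1$, then strictly decreasing to a local minimum at $z_2$, then strictly increasing afterwards.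
   Context: $f(z)=\frac{-\ln(1-z)(1-z)}{z}$ and $g(z)=f(z)(b-1)(a-1)+\frac1{1-z}+2-b-a$ for $z\in(0,1)$. $z_l$ (resp. $z_r$) is the unique $z\in(0,1)$ with $f(z)=\frac1{a-1}$ (resp. $\frac1{b-1}$). When $g$ has zeros in $(0,1)$, $z_1$ and $z_2$ are the smallest and largest of them. *)

From Stdlib Require Import Reals Lra Lia ZArith.
Open Scope R_scope.

Definition fz (z : R) : R := - ln (1 - z) * (1 - z) / z.

Definition g (a b : nat) (z : R) : R :=
  fz z * (INR b - 1) * (INR a - 1) + 1 / (1 - z) + 2 - INR b - INR a.

Definition zab (a b : nat) (z : R) : R := powerRZ z (Z.of_nat a - Z.of_nat b).

Definition hnum (a b : nat) (z : R) : R :=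
  INR a * zab a b z - INR b
  - fz z * (INR a * (INR a - 1) * zab a b z - INR b * (INR b - 1)).

Definition hden (a b : nat) (z : R) : R := INR b * ((INR b - 1) * fz z - 1).

Definition h (a b : nat) (z : R) : R := hnum a b z / hden a b z.

From Stdlib Require Import Reals Lra Lia ZArith Classical.
From Coquelicot Require Import Coquelicot.
Open Scope R_scope.

(** Two identities carry the proof.  First, hnum = a z^(a-b) (1 - (a-1) f) + hden, so
    h - 1 = a z^(a-b) (1 - (a-1) f) / hden.  As f decreases strictly on (0,1) with
    1 - z < f < 1, the factor 1 - (a-1) f changes sign only at zl and hden only at zr > zl;
    this gives the pole (i), the comparisons with 1 in (iv)-(vi) and the limits (ii)-(iii).
    Second, h' = hslope * g with hslope > 0 (vii), so monotonicity is governed by the sign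
    of g.  Two algebraic decompositions of (1-z) g show g > 0 outside (zl, zr), and g has at
    most two zeros in (0,1) (at most one if g >= 0): K(z) = z g(z) / (1-z) has K(0) = 0 and
    (1-z)^3 K'(z) is a quadratic polynomial, so Rolle's theorem bounds the zeros of K.
    Together with the mean value theorem this gives (viii)-(xi). *)

Lemma increasing_of_derive_pos (F F' : R -> R) x y : x < y ->
  (forall c, x <= c <= y -> derivable_pt_lim F c (F' c)) ->
  (forall c, x < c < y -> 0 < F' c) -> F x < F y.
Proof.
  intros Hxy Hd Hpos. destruct (MVT_cor2 F F' x y Hxy Hd) as [c [Hmvt Hc]].
  assert (0 < F' c * (y - x)) by (apply Rmult_lt_0_compat; [apply Hpos; exact Hc | lra]).
  lra.
Qed.

Lemma decreasing_of_derive_neg (F F' : R -> R) x y : x < y ->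
  (forall c, x <= c <= y -> derivable_pt_lim F c (F' c)) ->
  (forall c, x < c < y -> F' c < 0) -> F y < F x.
Proof.
  intros Hxy Hd Hneg. destruct (MVT_cor2 F F' x y Hxy Hd) as [c [Hmvt Hc]].
  assert (0 < - F' c * (y - x))
    by (apply Rmult_lt_0_compat; [apply Ropp_0_gt_lt_contravar, Hneg; exact Hc | lra]).
  lra.
Qed.

Lemma nondecreasing_of_derive_nonneg (F F' : R -> R) x y : x < y ->
  (forall c, x <= c <= y -> derivable_pt_lim F c (F' c)) ->
  (forall c, x < c < y -> 0 <= F' c) -> F x <= F y.
Proof.
  intros Hxy Hd Hnn. destruct (MVT_cor2 F F' x y Hxy Hd) as [c [Hmvt Hc]].
  assert (0 <= F' c * (y - x)) by (apply Rmult_le_pos; [apply Hnn; exact Hc | lra]).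
  lra.
Qed.

Lemma increasing_of_derive_pos_but_one (F F' : R -> R) p x y : x < y ->
  (forall c, x <= c <= y -> derivable_pt_lim F c (F' c)) ->
  (forall c, x < c < y -> 0 <= F' c) ->
  (forall c, x < c < y -> c <> p -> 0 < F' c) -> F x < F y.
Proof.
  intros Hxy Hd Hnn Hpos. set (m := (x + y) / 2).
  assert (Hweak : forall u v, x <= u -> u < v -> v <= y -> F u <= F v).
  { intros u v Hu Huv Hv. apply (nondecreasing_of_derive_nonneg F F' u v Huv);
      intros c Hc; [apply Hd | apply Hnn]; lra. }
  assert (Hstrict : forall u v, x <= u -> u < v -> v <= y -> p <= u \/ v <= p -> F u < F v).
  { intros u v Hu Huv Hv Hp. apply (increasing_of_derive_pos F F' u v Huv);
      intros c Hc; [apply Hd | apply Hpos]; lra. }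
  destruct (Rle_or_lt p m) as [Hp | Hp].
  - assert (F x <= F m) by (apply Hweak; unfold m; lra).
    assert (F m < F y) by (apply Hstrict; unfold m in *; lra). lra.
  - assert (F x < F m) by (apply Hstrict; unfold m in *; lra).
    assert (F m <= F y) by (apply Hweak; unfold m; lra). lra.
Qed.

Lemma continuity_pt_near (F : R -> R) x eps : continuity_pt F x -> 0 < eps ->
  exists d, 0 < d /\ forall z, Rabs (z - x) < d -> Rabs (F z - F x) < eps.
Proof.
  intros Hc Heps.
  destruct (proj1 (continuity_pt_locally F x) Hc (mkposreal eps Heps)) as [d Hd].
  exists d. split; [apply cond_pos |]. intros z Hz. apply (Hd z). exact Hz.
Qed.

Lemma sign_change_zero (F : R -> R) x y : x < y ->
  (forall t, x <= t <= y -> continuity_pt F t) ->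
  F x * F y < 0 -> exists t, x < t < y /\ F t = 0.
Proof.
  intros Hxy Hcont Hsign.
  assert (Hzero : exists t, x <= t <= y /\ F t = 0).
  { destruct (Rlt_or_le (F x) 0) as [Hx | Hx].
    - assert (Hy : 0 < F y) by nra.
      destruct (Ranalysis5.IVT_interv F x y Hcont Hxy Hx Hy) as [t Ht].
      exists t. exact Ht.
    - assert (Hx' : 0 < F x)
        by (destruct Hx as [Hx | Hx]; [exact Hx | rewrite <- Hx in Hsign; lra]).
      assert (Hy : F y < 0) by nra.
      destruct (Ranalysis5.IVT_interv (fun t => - F t) x y) as [t [Ht Hft]];
        [intros t Ht; apply continuity_pt_opp, Hcont, Ht | exact Hxy | lra | lra |].
      exists t. split; [exact Ht | lra]. }
  destruct Hzero as [t [Ht Hft]]. exists t. split; [| exact Hft].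
  split; apply Rnot_le_lt; intro Hle.
  - assert (t = x) by lra. subst t. rewrite Hft in Hsign. lra.
  - assert (t = y) by lra. subst t. rewrite Hft in Hsign. lra.
Qed.

Lemma zero_free_constant_sign (F : R -> R) x y p c :
  (forall t, x < t < y -> continuity_pt F t) -> (forall t, x < t < y -> F t <> 0) ->
  x < p < y -> x < c < y -> 0 < F p * F c.
Proof.
  intros Hcont Hnz Hp Hc.
  assert (Fp := Hnz p Hp). assert (Fc := Hnz c Hc).
  apply Rnot_le_lt. intros Hle.
  assert (Hneg : F p * F c < 0).
  { destruct Hle as [Hlt | Heq]; [exact Hlt |].
    apply Rmult_integral in Heq as [E | E]; contradiction. }
  destruct (Rtotal_order p c) as [Hpc | [Hpc | Hpc]].
  - destruct (sign_change_zero F p c Hpc) as [t [Ht Ft]];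
      [intros t Ht; apply Hcont; lra | exact Hneg |].
    apply (Hnz t); [lra | exact Ft].
  - subst c. nra.
  - destruct (sign_change_zero F c p Hpc) as [t [Ht Ft]];
      [intros t Ht; apply Hcont; lra | rewrite Rmult_comm; exact Hneg |].
    apply (Hnz t); [lra | exact Ft].
Qed.

Lemma ln_one_minus_bounds z : 0 < z < 1 -> z < - ln (1 - z) < z / (1 - z).
Proof.
  intros Hz. split.
  - assert (Hlt : ln (1 - z) < ln (exp (- z))).
    { apply ln_increasing; [lra |]. pose proof (exp_ineq1 (- z)). lra. }
    rewrite ln_exp in Hlt. lra.
  - rewrite <- ln_Rinv by lra. rewrite <- (ln_exp (z / (1 - z))).
    apply ln_increasing; [apply Rinv_0_lt_compat; lra |].
    replace (/ (1 - z)) with (1 + z / (1 - z)) by (field; lra).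
    apply exp_ineq1. apply Rgt_not_eq, Rdiv_lt_0_compat; lra.
Qed.

Lemma fz_bounds z : 0 < z < 1 -> 1 - z < fz z < 1.
Proof.
  intros Hz. destruct (ln_one_minus_bounds z Hz) as [Hlo Hhi].
  unfold fz. split.
  - apply Rmult_lt_reg_r with z; [lra |].
    replace (- ln (1 - z) * (1 - z) / z * z) with (- ln (1 - z) * (1 - z)) by (field; lra).
    apply Rmult_lt_compat_r with (r := 1 - z) in Hlo; lra.
  - apply Rmult_lt_reg_r with z; [lra |].
    replace (- ln (1 - z) * (1 - z) / z * z) with (- ln (1 - z) * (1 - z)) by (field; lra).
    apply Rmult_lt_compat_r with (r := 1 - z) in Hhi; [| lra].
    replace (z / (1 - z) * (1 - z)) with z in Hhi by (field; lra). lra.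
Qed.

Lemma fz_derive z : 0 < z < 1 -> derivable_pt_lim fz z ((1 - fz z / (1 - z)) / z).
Proof.
  intros Hz. apply is_derive_Reals. unfold fz. auto_derive.
  - repeat split; lra.
  - replace (1 + - z) with (1 - z) by ring. field. lra.
Qed.

Lemma fz_continuous z : 0 < z < 1 -> continuity_pt fz z.
Proof. intros Hz. apply derivable_continuous_pt. eexists. apply fz_derive, Hz. Qed.

(** f is strictly decreasing: by the lower bound, f'(z) = (1 - f(z)/(1-z))/z < 0. *)
Lemma fz_decreasing x y : 0 < x -> x < y -> y < 1 -> fz y < fz x.
Proof.
  intros Hx Hxy Hy.
  apply (decreasing_of_derive_neg fz (fun c => (1 - fz c / (1 - c)) / c)); [exact Hxy | |].
  - intros c Hc. apply fz_derive. lra.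
  - intros c Hc. destruct (fz_bounds c ltac:(lra)) as [Hlo _].
    apply Rdiv_neg_pos; [| lra].
    assert (1 < fz c / (1 - c)) by (apply Rlt_div_r; lra). lra.
Qed.

Lemma fz_level_sign k z0 z : 0 < k -> 0 < z0 < 1 -> k * fz z0 = 1 -> 0 < z < 1 ->
  (z < z0 -> 1 < k * fz z) /\ (z0 < z -> k * fz z < 1).
Proof.
  intros Hk Hz0 Hlev Hz. split; intros Hlt; rewrite <- Hlev;
    apply Rmult_lt_compat_l; try exact Hk; apply fz_decreasing; lra.
Qed.

Lemma g_decompositions a b z : 0 < z < 1 ->
  let al := INR a - 1 in let be := INR b - 1 in let w := 1 - z in
  (1 - z) * g a b z = al * be * w * (fz z - w) + (al * w - 1) * (be * w - 1) /\
  (1 - z) * g a b z = be * w * (al * fz z - 1) + (1 - al * w).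
Proof. intros Hz al be w. unfold g, al, be, w. split; field; lra. Qed.

Lemma g_pos_of_f_above a b z : 1 < INR a <= INR b -> 0 < z < 1 ->
  1 <= (INR a - 1) * fz z -> 0 < g a b z.
Proof.
  intros Hab Hz Hf. destruct (fz_bounds z Hz) as [Hlo _].
  destruct (g_decompositions a b z Hz) as [E1 E2].
  set (al := INR a - 1) in *. set (be := INR b - 1) in *. set (w := 1 - z) in *.
  assert (Hw : 0 < w) by (unfold w; lra).
  apply Rmult_lt_reg_l with w; [exact Hw |]. rewrite Rmult_0_r.
  destruct (Rlt_or_le (al * w) 1) as [Hsmall | Hlarge].
  - rewrite E2. assert (0 <= be * w * (al * fz z - 1)).
    { apply Rmult_le_pos; [apply Rmult_le_pos |]; unfold al, be in *; lra. }
    lra.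
  - rewrite E1. assert (be * w >= al * w) by (apply Rmult_ge_compat_r; unfold al, be in *; lra).
    assert (0 < al * be * w * (fz z - w)).
    { repeat apply Rmult_lt_0_compat; unfold al, be, w in *; lra. }
    assert (0 <= (al * w - 1) * (be * w - 1)) by (apply Rmult_le_pos; lra).
    lra.
Qed.

Lemma g_pos_of_f_below a b z : 1 < INR a <= INR b -> 0 < z < 1 ->
  (INR b - 1) * fz z <= 1 -> 0 < g a b z.
Proof.
  intros Hab Hz Hf. destruct (fz_bounds z Hz) as [Hlo _].
  destruct (g_decompositions a b z Hz) as [E1 _].
  set (al := INR a - 1) in *. set (be := INR b - 1) in *. set (w := 1 - z) in *.
  assert (Hw : 0 < w) by (unfold w; lra).
  assert (be * w < 1) by (apply Rlt_le_trans with (be * fz z); [| exact Hf];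
    apply Rmult_lt_compat_l; unfold be, w in *; lra).
  assert (al * w <= be * w) by (apply Rmult_le_compat_r; unfold al, be in *; lra).
  apply Rmult_lt_reg_l with w; [exact Hw |]. rewrite Rmult_0_r, E1.
  assert (0 < al * be * w * (fz z - w)).
  { repeat apply Rmult_lt_0_compat; unfold al, be, w in *; lra. }
  assert (0 < (1 - al * w) * (1 - be * w)) by (apply Rmult_lt_0_compat; lra).
  lra.
Qed.

Lemma g_continuous a b z : 0 < z < 1 -> continuity_pt (g a b) z.
Proof.
  intros Hz. apply derivable_continuous_pt, ex_derive_Reals_0.
  unfold g, fz. auto_derive. repeat split; lra.
Qed.

Lemma g_sign_change_zero a b x y : 0 < x -> x < y -> y < 1 ->
  g a b x * g a b y < 0 -> exists t, x < t < y /\ g a b t = 0.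
Proof.
  intros Hx Hxy Hy. apply sign_change_zero; [exact Hxy |].
  intros t Ht. apply g_continuous. lra.
Qed.

(** K(z) = z g(z) / (1-z), written with c = (a-1)(b-1) and s = a+b-2 (see [gK_g]);
    unlike g it extends to z = 0, with K(0) = 0. *)
Definition gK (c s z : R) : R := - c * ln (1 - z) + z / (1 - z) ^ 2 - s * z / (1 - z).

(** (1-z)^3 K'(z), a quadratic polynomial in z. *)
Definition gQ (c s z : R) : R := c * (1 - z) ^ 2 - s * (1 - z) + 1 + z.

Lemma gK_g a b z : 0 < z < 1 ->
  gK ((INR a - 1) * (INR b - 1)) (INR a + INR b - 2) z = g a b z * (z / (1 - z)).
Proof. intros Hz. unfold gK, g, fz. field. lra. Qed.

Lemma gK_at_zero c s : gK c s 0 = 0.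
Proof. unfold gK. rewrite Rminus_0_r, ln_1. field. Qed.

Lemma gK_derive c s z : z < 1 -> derivable_pt_lim (gK c s) z (gQ c s z / (1 - z) ^ 3).
Proof.
  intros Hz. apply is_derive_Reals. unfold gK, gQ. auto_derive.
  - repeat split; try lra. apply Rmult_integral_contrapositive; split; lra.
  - replace (1 + - z) with (1 - z) by ring. field. lra.
Qed.

Lemma gK_rolle c s x y : x < y -> y < 1 -> gK c s x = gK c s y ->
  exists t, x < t < y /\ gQ c s t = 0.
Proof.
  intros Hxy Hy Heq.
  destruct (MVT_cor2 (gK c s) (fun t => gQ c s t / (1 - t) ^ 3) x y Hxy) as [t [Hmvt Ht]].
  { intros t Ht. apply gK_derive. lra. }
  exists t. split; [exact Ht |].
  rewrite Heq, Rminus_diag in Hmvt.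
  assert (Hpow : 0 < (1 - t) ^ 3) by (apply pow_lt; lra).
  assert (Hdiv : gQ c s t / (1 - t) ^ 3 = 0).
  { apply Rmult_eq_reg_r with (y - x); [lra | lra]. }
  apply Rmult_eq_reg_r with (/ (1 - t) ^ 3); [| apply Rinv_neq_0_compat; lra].
  rewrite Rmult_0_l. exact Hdiv.
Qed.

Lemma gQ_zero_at_gK_min c s t : 0 < t < 1 ->
  (forall x, 0 < x < 1 -> gK c s t <= gK c s x) -> gQ c s t = 0.
Proof.
  intros Ht Hmin.
  assert (Hd := gK_derive c s t ltac:(lra)).
  assert (Hcrit := deriv_minimum (gK c s) 0 1 t (exist _ _ Hd) ltac:(lra) ltac:(lra)
    ltac:(intros x Hx0 Hx1; apply Hmin; lra)).
  simpl in Hcrit.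
  assert (Hpow : 0 < (1 - t) ^ 3) by (apply pow_lt; lra).
  apply Rmult_eq_reg_r with (/ (1 - t) ^ 3); [| apply Rinv_neq_0_compat; lra].
  rewrite Rmult_0_l. exact Hcrit.
Qed.

Lemma gQ_at_most_two_roots c s r1 r2 r3 : 0 < c -> r1 < r2 -> r2 < r3 ->
  gQ c s r1 = 0 -> gQ c s r2 = 0 -> gQ c s r3 = 0 -> False.
Proof.
  unfold gQ; intros Hc H12 H23 Q1 Q2 Q3.
  assert (E12 : (r2 - r1) * (c * (2 - r1 - r2) - s - 1) = 0) by nra.
  assert (E13 : (r3 - r1) * (c * (2 - r1 - r3) - s - 1) = 0) by nra.
  apply Rmult_integral in E12 as [E12 | E12]; [lra |].
  apply Rmult_integral in E13 as [E13 | E13]; [lra |].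
  nra.
Qed.

(** g has at most two zeros in (0,1): three zeros of g, with K(0) = 0, give four zeros
    of K and, by Rolle, three roots of Q. *)
Lemma g_at_most_two_zeros a b t1 t2 t3 : 1 < INR a -> 1 < INR b ->
  0 < t1 -> t1 < t2 -> t2 < t3 -> t3 < 1 ->
  g a b t1 = 0 -> g a b t2 = 0 -> g a b t3 = 0 -> False.
Proof.
  intros Ha Hb H1 H12 H23 H3 G1 G2 G3.
  set (c := (INR a - 1) * (INR b - 1)). set (s := INR a + INR b - 2).
  assert (K1 : gK c s t1 = 0) by (unfold c, s; rewrite gK_g, G1; [ring | lra]).
  assert (K2 : gK c s t2 = 0) by (unfold c, s; rewrite gK_g, G2; [ring | lra]).
  assert (K3 : gK c s t3 = 0) by (unfold c, s; rewrite gK_g, G3; [ring | lra]).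
  destruct (gK_rolle c s 0 t1) as [r1 [R1 Q1]]; [lra | lra | rewrite gK_at_zero, K1; reflexivity |].
  destruct (gK_rolle c s t1 t2) as [r2 [R2 Q2]]; [lra | lra | congruence |].
  destruct (gK_rolle c s t2 t3) as [r3 [R3 Q3]]; [lra | lra | congruence |].
  apply (gQ_at_most_two_roots c s r1 r2 r3); try lra; try assumption.
  unfold c. apply Rmult_lt_0_compat; lra.
Qed.

(** If g >= 0 on (0,1), it has at most one zero there: a zero t1 of g is then a minimum
    of K, so Q(t1) = 0 adds a third root of Q to those given by Rolle. *)
Lemma g_nonneg_at_most_one_zero a b t1 t2 : 1 < INR a -> 1 < INR b ->
  (forall z, 0 < z < 1 -> 0 <= g a b z) -> 0 < t1 -> t1 < t2 -> t2 < 1 ->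
  g a b t1 = 0 -> g a b t2 = 0 -> False.
Proof.
  intros Ha Hb Hnn H1 H12 H2 G1 G2.
  set (c := (INR a - 1) * (INR b - 1)). set (s := INR a + INR b - 2).
  assert (K1 : gK c s t1 = 0) by (unfold c, s; rewrite gK_g, G1; [ring | lra]).
  assert (K2 : gK c s t2 = 0) by (unfold c, s; rewrite gK_g, G2; [ring | lra]).
  destruct (gK_rolle c s 0 t1) as [r1 [R1 Q1]]; [lra | lra | rewrite gK_at_zero, K1; reflexivity |].
  destruct (gK_rolle c s t1 t2) as [r2 [R2 Q2]]; [lra | lra | congruence |].
  assert (Qt1 : gQ c s t1 = 0).
  { apply gQ_zero_at_gK_min; [lra |]. intros x Hx.
    rewrite K1. unfold c, s. rewrite gK_g by exact Hx.
    apply Rmult_le_pos; [apply Hnn, Hx |]. apply Rlt_le, Rdiv_lt_0_compat; lra. }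
  apply (gQ_at_most_two_roots c s r1 t1 r2); try lra; try assumption.
  unfold c. apply Rmult_lt_0_compat; lra.
Qed.

Lemma zab_inverse_power a b z : (a <= b)%nat -> zab a b z = / z ^ (b - a).
Proof.
  intros Hab. unfold zab. rewrite pow_powerRZ, <- powerRZ_neg', Nat2Z.inj_sub by exact Hab.
  f_equal. ring.
Qed.

Lemma zab_lower_bound a b z : (a < b)%nat -> 0 < z < 1 -> 1 <= / z <= zab a b z.
Proof.
  intros Hab Hz. rewrite zab_inverse_power by lia.
  destruct (b - a)%nat as [| k] eqn:Hk; [lia |]. simpl pow.
  assert (Hk1 : 0 < z ^ k <= 1).
  { split; [apply pow_lt; lra |].
    destruct k as [| k]; [simpl; lra |]. apply Rlt_le, pow_lt_1_compat; [lra | lia]. }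
  split.
  - rewrite <- Rinv_1. apply Rinv_le_contravar; lra.
  - apply Rinv_le_contravar; [apply Rmult_lt_0_compat; lra |].
    assert (z * z ^ k <= z * 1) by (apply Rmult_le_compat_l; lra). lra.
Qed.

Lemma hnum_split a b z :
  hnum a b z = INR a * zab a b z * (1 - (INR a - 1) * fz z) + hden a b z.
Proof. unfold hnum, hden. ring. Qed.

Lemma h_shift a b z : hden a b z <> 0 ->
  h a b z = 1 + INR a * zab a b z * (1 - (INR a - 1) * fz z) / hden a b z.
Proof. intros Hden. unfold h. rewrite hnum_split. field. exact Hden. Qed.

(** The positive factor in h'(z) = hslope(z) g(z). *)
Definition hslope (a b : nat) (z : R) : R :=
  INR a * zab a b z * (INR b - INR a) * fz z / (z * INR b * ((INR b - 1) * fz z - 1) ^ 2).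

Lemma h_derive a b z : (a < b)%nat -> 0 < z < 1 -> hden a b z <> 0 ->
  derivable_pt_lim (h a b) z (hslope a b z * g a b z).
Proof.
  intros Hab Hz Hden. apply is_derive_Reals.
  assert (Hn : INR (b - a) = INR b - INR a) by (apply minus_INR; lia).
  unfold h, hnum, hslope, g.
  apply (is_derive_ext (fun t => (INR a * / t ^ (b - a) - INR b
      - fz t * (INR a * (INR a - 1) * / t ^ (b - a) - INR b * (INR b - 1))) / hden a b t)).
  { intros t. rewrite zab_inverse_power by lia. reflexivity. }
  rewrite zab_inverse_power by lia.
  unfold hden in *. apply Rmult_neq_0_reg in Hden as [HB Hv].
  destruct (b - a)%nat as [| k] eqn:Hk; [lia |].
  assert (Hzk : z * z ^ k <> 0) by (apply Rmult_integral_contrapositive; split;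
    [lra | apply pow_nonzero; lra]).
  unfold fz in *. replace (1 - z) with (1 + - z) in * by ring. auto_derive.
  - repeat split; try lra; try exact Hzk.
    apply Rmult_integral_contrapositive; split; [exact HB | exact Hv].
  - change (match k with O => 1 | S _ => INR k + 1 end) with (INR (S k)).
    rewrite Hn. simpl pow. field. repeat split; try lra; try exact HB.
    + apply pow_nonzero; lra.
    + intros E. apply Hv.
      replace ((INR b - 1) * (- ln (1 + - z) * (1 + - z) / z) - 1)
        with (((INR b - 1) * (- ln (1 + - z) * (1 + - z)) - z) / z) by (field; lra).
      rewrite E. field. lra.
Qed.

Lemma hslope_pos a b z : (0 < a)%nat -> (a < b)%nat -> 0 < z < 1 -> hden a b z <> 0 ->
  0 < hslope a b z.
Proof.
  intros Ha Hab Hz Hden. unfold hden in Hden. apply Rmult_neq_0_reg in Hden as [HB Hv].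
  assert (Ha0 : 0 < INR a) by (apply lt_0_INR; exact Ha).
  assert (Hab' : INR a < INR b) by (apply lt_INR; exact Hab).
  assert (Hzab : 0 < zab a b z) by (pose proof (zab_lower_bound a b z Hab Hz); lra).
  assert (Hf : 0 < fz z) by (pose proof (fz_bounds z Hz); lra).
  unfold hslope. apply Rdiv_lt_0_compat.
  - apply Rmult_lt_0_compat; [| exact Hf].
    apply Rmult_lt_0_compat; [apply Rmult_lt_0_compat |]; lra.
  - apply Rmult_lt_0_compat; [apply Rmult_lt_0_compat; lra | apply pow2_gt_0, Hv].
Qed.

Section ShapeOfH.

Variables (a b : nat) (zl zr : R).
Hypothesis Ha : (3 <= a)%nat.
Hypothesis Hab : (a < b)%nat.
Hypothesis Hzl : 0 < zl < 1 /\ fz zl = 1 / (INR a - 1).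
Hypothesis Hzr : 0 < zr < 1 /\ fz zr = 1 / (INR b - 1).

Lemma a_ge_3 : 3 <= INR a.
Proof. replace 3 with (INR 3) by (simpl; ring). apply le_INR, Ha. Qed.

Lemma a_lt_b : INR a + 1 <= INR b.
Proof. rewrite <- S_INR. apply le_INR, Hab. Qed.

Lemma zl_level : (INR a - 1) * fz zl = 1.
Proof. destruct Hzl as [_ Hf]. rewrite Hf. pose proof a_ge_3. field. lra. Qed.

Lemma zr_level : (INR b - 1) * fz zr = 1.
Proof. destruct Hzr as [_ Hf]. rewrite Hf. pose proof a_ge_3. pose proof a_lt_b. field. lra. Qed.

(** zl < zr because f decreases and the level 1/(a-1) lies above 1/(b-1). *)
Lemma zl_lt_zr : zl < zr.
Proof.
  pose proof a_ge_3. pose proof a_lt_b. pose proof zl_level. pose proof zr_level.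
  destruct Hzl as [Hl _]. destruct Hzr as [Hr _].
  destruct (Rlt_or_le zl zr) as [Hlt | Hle]; [exact Hlt | exfalso].
  assert (Hf : fz zl <= fz zr).
  { destruct Hle as [Hlt | Heq]; [apply Rlt_le, fz_decreasing; lra | subst; lra]. }
  assert ((INR a - 1) * fz zl < (INR b - 1) * fz zr).
  { apply Rlt_le_trans with ((INR b - 1) * fz zl).
    - apply Rmult_lt_compat_r; [pose proof (fz_bounds zl Hl); lra | lra].
    - apply Rmult_le_compat_l; lra. }
  lra.
Qed.

Lemma excess_sign z : 0 < z < 1 ->
  (z < zl -> 1 - (INR a - 1) * fz z < 0) /\ (zl < z -> 0 < 1 - (INR a - 1) * fz z).
Proof.
  intros Hz. pose proof a_ge_3. destruct Hzl as [Hl _].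
  destruct (fz_level_sign (INR a - 1) zl z ltac:(lra) Hl zl_level Hz). split; intros; lra.
Qed.

Lemma hden_sign z : 0 < z < 1 -> (z < zr -> 0 < hden a b z) /\ (zr < z -> hden a b z < 0).
Proof.
  intros Hz. pose proof a_ge_3. pose proof a_lt_b. destruct Hzr as [Hr _].
  destruct (fz_level_sign (INR b - 1) zr z ltac:(lra) Hr zr_level Hz) as [Hlt Hgt].
  unfold hden. split; intros Hc.
  - apply Rmult_lt_0_compat; [lra |]. specialize (Hlt Hc). lra.
  - apply Rmult_pos_neg; [lra |]. specialize (Hgt Hc). lra.
Qed.

Lemma hden_zr : hden a b zr = 0.
Proof. unfold hden. rewrite zr_level. ring. Qed.

Lemma hden_nonzero z : 0 < z < 1 -> z <> zr -> hden a b z <> 0.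
Proof.
  intros Hz Hne. destruct (hden_sign z Hz) as [Hlt Hgt].
  destruct (Rtotal_order z zr) as [C | [C | C]];
    [specialize (Hlt C) | contradiction | specialize (Hgt C)]; lra.
Qed.

Lemma scale_pos z : 0 < z < 1 -> 0 < INR a * zab a b z.
Proof.
  intros Hz. pose proof a_ge_3. pose proof (zab_lower_bound a b z Hab Hz).
  apply Rmult_lt_0_compat; lra.
Qed.

Lemma h_pole : (forall z, 0 < z < 1 -> (hden a b z = 0 <-> z = zr)) /\ hnum a b zr <> 0.
Proof.
  split.
  - intros z Hz. split; [| intros ->; exact hden_zr].
    intros Hzero. destruct (Req_dec z zr) as [Heq | Hne]; [exact Heq |].
    contradiction (hden_nonzero z Hz Hne).
  - destruct Hzr as [Hr _]. pose proof zl_lt_zr.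
    rewrite hnum_split, hden_zr, Rplus_0_r.
    apply Rgt_not_eq, Rmult_lt_0_compat; [apply scale_pos, Hr | apply (excess_sign zr Hr); lra].
Qed.

(** (iv)-(vi): h - 1 is the quotient of the two sign-changing factors, times a z^(a-b) > 0. *)
Lemma h_at_zl : h a b zl = 1.
Proof.
  destruct Hzl as [Hl _]. pose proof zl_lt_zr.
  rewrite h_shift by (apply hden_nonzero; lra).
  replace (1 - (INR a - 1) * fz zl) with 0 by (rewrite zl_level; ring).
  unfold Rdiv. ring.
Qed.

Lemma h_below_zl z : 0 < z < zl -> h a b z < 1.
Proof.
  intros Hz. destruct Hzl as [Hl _]. pose proof zl_lt_zr.
  assert (Hz1 : 0 < z < 1) by lra.
  rewrite h_shift by (apply hden_nonzero; lra).
  assert (INR a * zab a b z * (1 - (INR a - 1) * fz z) / hden a b z < 0); [| lra].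
  apply Rdiv_neg_pos.
  - apply Rmult_pos_neg; [apply scale_pos, Hz1 | apply (excess_sign z Hz1); lra].
  - apply (hden_sign z Hz1). lra.
Qed.

Lemma h_at_most_one_left z : 0 < z <= zl -> h a b z <= 1.
Proof.
  intros [Hz [Hlt | ->]]; [apply Rlt_le, h_below_zl; lra | rewrite h_at_zl; lra].
Qed.

Lemma h_between z : zl < z < zr -> 1 < h a b z.
Proof.
  intros Hz. destruct Hzl as [Hl _]. destruct Hzr as [Hr _].
  assert (Hz1 : 0 < z < 1) by lra.
  rewrite h_shift by (apply hden_nonzero; lra).
  assert (0 < INR a * zab a b z * (1 - (INR a - 1) * fz z) / hden a b z); [| lra].
  apply Rdiv_lt_0_compat.
  - apply Rmult_lt_0_compat; [apply scale_pos, Hz1 | apply (excess_sign z Hz1); lra].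
  - apply (hden_sign z Hz1). lra.
Qed.

Lemma h_beyond_zr z : zr < z < 1 -> h a b z < 1.
Proof.
  intros Hz. destruct Hzr as [Hr _]. pose proof zl_lt_zr.
  assert (Hz1 : 0 < z < 1) by lra.
  rewrite h_shift by (apply hden_nonzero; lra).
  assert (INR a * zab a b z * (1 - (INR a - 1) * fz z) / hden a b z < 0); [| lra].
  apply Rdiv_pos_neg.
  - apply Rmult_lt_0_compat; [apply scale_pos, Hz1 | apply (excess_sign z Hz1); lra].
  - apply (hden_sign z Hz1). lra.
Qed.

Lemma h_derive_sign z : 0 < z < 1 -> z <> zr ->
  derivable_pt_lim (h a b) z (hslope a b z * g a b z) /\ 0 < hslope a b z.
Proof.
  intros Hz Hne. pose proof (hden_nonzero z Hz Hne).
  split; [apply h_derive | apply hslope_pos]; try assumption; lia.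
Qed.

Lemma h_derivative_sign z : 0 < z < 1 -> z <> zr ->
  exists l, derivable_pt_lim (h a b) z l /\ (0 < l <-> 0 < g a b z).
Proof.
  intros Hz Hne. destruct (h_derive_sign z Hz Hne) as [Hder Hslope].
  exists (hslope a b z * g a b z). split; [exact Hder |]. split; intros Hpos.
  - apply Rnot_le_lt. intros Hg. assert (hslope a b z * g a b z <= 0); [| lra].
    apply Rmult_le_0_l; lra.
  - apply Rmult_lt_0_compat; assumption.
Qed.

Lemma h_increasing_where_g_pos x y : 0 < x -> x < y -> y < 1 -> (y < zr \/ zr < x) ->
  (forall c, x < c < y -> 0 < g a b c) -> h a b x < h a b y.
Proof.
  intros Hx Hxy Hy Hpole Hg.
  apply (increasing_of_derive_pos (h a b) (fun c => hslope a b c * g a b c)); [exact Hxy | |].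
  - intros c Hc. apply h_derive_sign; lra.
  - intros c Hc. apply Rmult_lt_0_compat; [apply h_derive_sign | apply Hg]; lra.
Qed.

Lemma h_decreasing_where_g_neg x y : 0 < x -> x < y -> y < 1 -> (y < zr \/ zr < x) ->
  (forall c, x < c < y -> g a b c < 0) -> h a b y < h a b x.
Proof.
  intros Hx Hxy Hy Hpole Hg.
  apply (decreasing_of_derive_neg (h a b) (fun c => hslope a b c * g a b c)); [exact Hxy | |].
  - intros c Hc. apply h_derive_sign; lra.
  - intros c Hc. apply Rmult_pos_neg; [apply h_derive_sign | apply Hg]; lra.
Qed.

Lemma g_pos_outside z : 0 < z < 1 -> z <= zl \/ zr <= z -> 0 < g a b z.
Proof.
  intros Hz Hside. pose proof a_ge_3. pose proof a_lt_b.
  destruct Hzl as [Hl _]. destruct Hzr as [Hr _].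
  assert (Hab' : 1 < INR a <= INR b) by lra.
  destruct Hside as [Hle | Hge].
  - apply g_pos_of_f_above; [exact Hab' | exact Hz |].
    destruct Hle as [Hlt | ->]; [| rewrite zl_level; lra].
    destruct (fz_level_sign (INR a - 1) zl z ltac:(lra) Hl zl_level Hz) as [Habove _].
    apply Rlt_le, Habove, Hlt.
  - apply g_pos_of_f_below; [exact Hab' | exact Hz |].
    destruct Hge as [Hlt | <-]; [| rewrite zr_level; lra].
    destruct (fz_level_sign (INR b - 1) zr z ltac:(lra) Hr zr_level Hz) as [_ Hbelow].
    apply Rlt_le, Hbelow, Hlt.
Qed.

(** (x): if g >= 0 it vanishes at most once, so h' > 0 off at most one point. *)
Lemma h_increasing_if_g_nonneg : (forall z, 0 < z < 1 -> 0 <= g a b z) ->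
  forall x y, zl <= x -> x < y -> y < zr -> h a b x < h a b y.
Proof.
  intros Hnn x y Hx Hxy Hy. pose proof a_ge_3. pose proof a_lt_b.
  destruct Hzl as [Hl _]. destruct Hzr as [Hr _].
  assert (Hzero : exists p, forall c, 0 < c < 1 -> c <> p -> g a b c <> 0).
  { destruct (classic (exists p, 0 < p < 1 /\ g a b p = 0)) as [[p [Hp Gp]] | Hnone].
    - exists p. intros c Hc Hcp Gc.
      destruct (Rtotal_order c p) as [C | [C | C]]; [| contradiction |].
      + apply (g_nonneg_at_most_one_zero a b c p); try assumption; lra.
      + apply (g_nonneg_at_most_one_zero a b p c); try assumption; lra.
    - exists 0. intros c Hc _ Gc. apply Hnone. exists c. split; assumption. }
  destruct Hzero as [p Hp].
  apply (increasing_of_derive_pos_but_one (h a b) (fun c => hslope a b c * g a b c) p);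
    [exact Hxy | | |].
  - intros c Hc. apply h_derive_sign; lra.
  - intros c Hc. apply Rmult_le_pos; [apply Rlt_le, h_derive_sign | apply Hnn]; lra.
  - intros c Hc Hcp. apply Rmult_lt_0_compat; [apply h_derive_sign; lra |].
    assert (g a b c <> 0) by (apply Hp; lra).
    assert (0 <= g a b c) by (apply Hnn; lra). lra.
Qed.

(** (viii), (ix): g > 0 on both sides of [zl, zr]. *)
Lemma h_increasing_left x y : 0 < x -> x < y -> y <= zl -> h a b x < h a b y.
Proof.
  intros Hx Hxy Hy. destruct Hzl as [Hl _]. pose proof zl_lt_zr.
  apply h_increasing_where_g_pos; try lra.
  intros c Hc. apply g_pos_outside; lra.
Qed.

Lemma h_increasing_right x y : zr < x -> x < y -> y < 1 -> h a b x < h a b y.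
Proof.
  intros Hx Hxy Hy. destruct Hzr as [Hr _].
  apply h_increasing_where_g_pos; try lra.
  intros c Hc. apply g_pos_outside; lra.
Qed.

Lemma g_sign_pattern zs z1 z2 : 0 < zs < 1 -> g a b zs < 0 ->
  0 < z1 < 1 -> g a b z1 = 0 -> (forall z, 0 < z < 1 -> g a b z = 0 -> z1 <= z) ->
  0 < z2 < 1 -> g a b z2 = 0 -> (forall z, 0 < z < 1 -> g a b z = 0 -> z <= z2) ->
  zl < z1 < z2 /\ z2 < zr /\ (forall c, 0 < c < z1 -> 0 < g a b c) /\
  (forall c, z1 < c < z2 -> g a b c < 0) /\ (forall c, z2 < c < 1 -> 0 < g a b c).
Proof.
  intros Hzs Gs Hz1 G1 First Hz2 G2 Last.
  pose proof a_ge_3. pose proof a_lt_b. pose proof zl_lt_zr.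
  destruct Hzl as [Hl _]. destruct Hzr as [Hr _].
  assert (Hmid : zl < zs < zr).
  { split; apply Rnot_le_lt; intros Hle;
      assert (0 < g a b zs) by (apply g_pos_outside; lra); lra. }
  assert (Gl := g_pos_outside zl ltac:(lra) ltac:(lra)).
  assert (Gr := g_pos_outside zr ltac:(lra) ltac:(lra)).
  destruct (g_sign_change_zero a b zl zs) as [t1 [Ht1 Gt1]]; [lra | lra | lra | nra |].
  destruct (g_sign_change_zero a b zs zr) as [t2 [Ht2 Gt2]]; [lra | lra | lra | nra |].
  assert (z1 <= t1) by (apply First; [lra | exact Gt1]).
  assert (t2 <= z2) by (apply Last; [lra | exact Gt2]).
  assert (Hz1l : zl < z1) by (apply Rnot_le_lt; intros Hle;
    assert (0 < g a b z1) by (apply g_pos_outside; lra); lra).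
  assert (Hz2r : z2 < zr) by (apply Rnot_le_lt; intros Hle;
    assert (0 < g a b z2) by (apply g_pos_outside; lra); lra).
  assert (Hcont : forall x y, 0 <= x -> y <= 1 -> forall t, x < t < y -> continuity_pt (g a b) t)
    by (intros x y Hx Hy t Ht; apply g_continuous; lra).
  split; [lra |]. split; [lra |]. split; [| split].
  - intros c Hc. assert (Gp := g_pos_outside (zl / 2) ltac:(lra) ltac:(lra)).
    assert (0 < g a b (zl / 2) * g a b c); [| nra].
    apply (zero_free_constant_sign (g a b) 0 z1); [apply Hcont; lra | | lra | lra].
    intros t Ht Gt. assert (z1 <= t) by (apply First; [lra | exact Gt]). lra.
  - intros c Hc.
    assert (0 < g a b zs * g a b c); [| nra].
    apply (zero_free_constant_sign (g a b) z1 z2); [apply Hcont; lra | | lra | lra].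
    intros t Ht Gt. apply (g_at_most_two_zeros a b z1 t z2); lra.
  - intros c Hc. assert (Gp := g_pos_outside ((zr + 1) / 2) ltac:(lra) ltac:(lra)).
    assert (0 < g a b ((zr + 1) / 2) * g a b c); [| nra].
    apply (zero_free_constant_sign (g a b) z2 1); [apply Hcont; lra | | lra | lra].
    intros t Ht Gt. assert (t <= z2) by (apply Last; [lra | exact Gt]). lra.
Qed.

Lemma h_shape_if_g_negative : (exists z, 0 < z < 1 /\ g a b z < 0) ->
  forall z1 z2 : R,
  (0 < z1 < 1 /\ g a b z1 = 0 /\ forall z, 0 < z < 1 -> g a b z = 0 -> z1 <= z) ->
  (0 < z2 < 1 /\ g a b z2 = 0 /\ forall z, 0 < z < 1 -> g a b z = 0 -> z <= z2) ->
  zl < z1 < z2 /\ z2 < zr /\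
  (forall x y, zl <= x -> x < y -> y <= z1 -> h a b x < h a b y) /\
  (forall x y, z1 <= x -> x < y -> y <= z2 -> h a b y < h a b x) /\
  (forall x y, z2 <= x -> x < y -> y < zr -> h a b x < h a b y).
Proof.
  intros [zs [Hzs Gs]] z1 z2 [Hz1 [G1 First]] [Hz2 [G2 Last]].
  destruct (g_sign_pattern zs z1 z2 Hzs Gs Hz1 G1 First Hz2 G2 Last)
    as [Hz12 [Hz2r [Gbefore [Gbetween Gafter]]]].
  destruct Hzl as [Hl _].
  split; [exact Hz12 |]. split; [exact Hz2r |]. split; [| split].
  - intros x y Hx Hxy Hy. apply h_increasing_where_g_pos; try lra.
    intros c Hc. apply Gbefore. lra.
  - intros x y Hx Hxy Hy. apply h_decreasing_where_g_neg; try lra.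
    intros c Hc. apply Gbetween. lra.
  - intros x y Hx Hxy Hy. apply h_increasing_where_g_pos; try lra.
    intros c Hc. apply Gafter. lra.
Qed.

(** Near 0, h(z) < 1 - C / z with C = a(a-2) / (2b(b-2)) > 0: there z^(a-b) >= 1/z,
    1 - (a-1) f(z) < (2-a)/2 and 0 < hden < b(b-2). *)
Lemma h_upper_near_zero z : 0 < z -> z < zr -> z < (INR a - 2) / (2 * (INR a - 1)) ->
  h a b z < 1 - INR a * (INR a - 2) / (2 * INR b * (INR b - 2)) / z.
Proof.
  intros Hz0 Hzr' Hsmall. pose proof a_ge_3. pose proof a_lt_b. destruct Hzr as [Hr _].
  assert (Hz : 0 < z < 1) by lra.
  destruct (zab_lower_bound a b z Hab Hz) as [_ Hp].
  destruct (fz_bounds z Hz) as [Hflo Hfhi].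
  assert (HD : 0 < hden a b z) by (apply (hden_sign z Hz); lra).
  assert (HDB : hden a b z < INR b * (INR b - 2)).
  { unfold hden. apply Rmult_lt_compat_l; [lra |].
    assert ((INR b - 1) * fz z < (INR b - 1) * 1) by (apply Rmult_lt_compat_l; lra). lra. }
  assert (Hu : 1 - (INR a - 1) * fz z < (2 - INR a) / 2).
  { assert ((INR a - 1) * z < (INR a - 2) / 2).
    { apply Rmult_lt_compat_l with (r := INR a - 1) in Hsmall; [| lra].
      replace ((INR a - 1) * ((INR a - 2) / (2 * (INR a - 1)))) with ((INR a - 2) / 2) in Hsmall
        by (field; lra). exact Hsmall. }
    assert ((INR a - 1) * (1 - z) < (INR a - 1) * fz z) by (apply Rmult_lt_compat_l; lra).
    lra. }
  set (u := 1 - (INR a - 1) * fz z) in *.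
  set (N := INR a * zab a b z * u).
  assert (HN : N < - (INR a * (INR a - 2) / 2) / z).
  { assert (zab a b z * u <= / z * u)
      by (rewrite !(Rmult_comm _ u); apply Rmult_le_compat_neg_l; lra).
    assert (/ z * u < / z * ((2 - INR a) / 2))
      by (apply Rmult_lt_compat_l; [apply Rinv_0_lt_compat |]; lra).
    unfold N. replace (- (INR a * (INR a - 2) / 2) / z) with (INR a * (/ z * ((2 - INR a) / 2)))
      by (field; lra).
    rewrite Rmult_assoc. apply Rmult_lt_compat_l; lra. }
  rewrite h_shift by lra. fold u N.
  assert (HNB : N / hden a b z < N / (INR b * (INR b - 2))).
  { unfold Rdiv. apply Rmult_lt_gt_compat_neg_l.
    - assert (0 < INR a * (INR a - 2) / 2 / z) by (apply Rdiv_lt_0_compat; nra). lra.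
    - apply Rinv_lt_contravar; [apply Rmult_lt_0_compat |]; lra. }
  assert (N / (INR b * (INR b - 2)) < - (INR a * (INR a - 2) / 2) / z / (INR b * (INR b - 2))).
  { unfold Rdiv at 1 3. apply Rmult_lt_compat_r; [apply Rinv_0_lt_compat; nra | exact HN]. }
  replace (1 - INR a * (INR a - 2) / (2 * INR b * (INR b - 2)) / z)
    with (1 + - (INR a * (INR a - 2) / 2) / z / (INR b * (INR b - 2))) by (field; lra).
  lra.
Qed.

Lemma h_tends_to_minus_infinity_at_zero :
  forall M, exists d, 0 < d /\ forall z, 0 < z < d -> h a b z < M.
Proof.
  intros M. pose proof a_ge_3. pose proof a_lt_b. destruct Hzr as [Hr _].
  set (C := INR a * (INR a - 2) / (2 * INR b * (INR b - 2))).
  assert (HC : 0 < C) by (apply Rdiv_lt_0_compat; nra).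
  assert (HM : 0 < Rabs M + 1) by (pose proof (Rabs_pos M); lra).
  assert (Hbound : 0 < (INR a - 2) / (2 * (INR a - 1))) by (apply Rdiv_lt_0_compat; lra).
  exists (Rmin (Rmin zr ((INR a - 2) / (2 * (INR a - 1)))) (C / (Rabs M + 1))).
  split.
  { repeat apply Rmin_glb_lt; try lra. apply Rdiv_lt_0_compat; lra. }
  intros z Hz.
  pose proof (Rmin_l (Rmin zr ((INR a - 2) / (2 * (INR a - 1)))) (C / (Rabs M + 1))).
  pose proof (Rmin_r (Rmin zr ((INR a - 2) / (2 * (INR a - 1)))) (C / (Rabs M + 1))).
  pose proof (Rmin_l zr ((INR a - 2) / (2 * (INR a - 1)))).
  pose proof (Rmin_r zr ((INR a - 2) / (2 * (INR a - 1)))).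
  assert (Hlarge : Rabs M + 1 < C / z).
  { apply Rlt_div_r; [lra |]. rewrite Rmult_comm. apply Rlt_div_r; lra. }
  assert (h a b z < 1 - C / z) by (apply h_upper_near_zero; lra).
  pose proof (Rle_abs (- M)). rewrite Rabs_Ropp in *. lra.
Qed.

Lemma h_lower_near_pole z : (zl + zr) / 2 < z < zr ->
  1 + INR a * (1 - (INR a - 1) * fz ((zl + zr) / 2)) / hden a b z <= h a b z.
Proof.
  intros Hz. pose proof a_ge_3. pose proof zl_lt_zr. destruct Hzl as [Hl _].
  assert (Hz1 : 0 < z < 1) by lra.
  destruct (zab_lower_bound a b z Hab Hz1) as [Hinv Hp].
  assert (HD : 0 < hden a b z) by (apply (hden_sign z Hz1); lra).
  assert (Hu0 : 0 < 1 - (INR a - 1) * fz ((zl + zr) / 2)) by (apply excess_sign; lra).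
  assert (Hu : 1 - (INR a - 1) * fz ((zl + zr) / 2) <= 1 - (INR a - 1) * fz z).
  { assert (fz z < fz ((zl + zr) / 2)) by (apply fz_decreasing; lra).
    assert ((INR a - 1) * fz z <= (INR a - 1) * fz ((zl + zr) / 2))
      by (apply Rmult_le_compat_l; lra). lra. }
  rewrite h_shift by lra. apply Rplus_le_compat_l.
  unfold Rdiv. apply Rmult_le_compat_r; [apply Rlt_le, Rinv_0_lt_compat, HD |].
  rewrite Rmult_assoc. apply Rmult_le_compat_l; [lra |].
  apply Rle_trans with (1 * (1 - (INR a - 1) * fz z)); [lra |].
  apply Rmult_le_compat_r; lra.
Qed.

(** hden(z) = b (b-1) (f(z) - f(zr)), so it tends to 0 at zr by continuity of f. *)
Lemma hden_as_difference z : hden a b z = INR b * (INR b - 1) * (fz z - fz zr).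
Proof.
  unfold hden. transitivity (INR b * ((INR b - 1) * fz z - (INR b - 1) * fz zr));
    [rewrite zr_level; reflexivity | ring].
Qed.

Lemma h_tends_to_plus_infinity_at_pole :
  forall M, exists d, 0 < d /\ forall z, zr - d < z < zr -> M < h a b z.
Proof.
  intros M. pose proof a_ge_3. pose proof a_lt_b. pose proof zl_lt_zr.
  destruct Hzl as [Hl _]. destruct Hzr as [Hr _].
  set (m := (zl + zr) / 2).
  set (A := INR a * (1 - (INR a - 1) * fz m)).
  assert (HA : 0 < A) by (apply Rmult_lt_0_compat; [lra | apply excess_sign; unfold m; lra]).
  assert (HM : 0 < Rabs M + 1) by (pose proof (Rabs_pos M); lra).
  set (eps := A / (INR b * (INR b - 1) * (Rabs M + 1))).
  assert (Heps : 0 < eps)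
    by (apply Rdiv_lt_0_compat; [exact HA | repeat apply Rmult_lt_0_compat; lra]).
  destruct (continuity_pt_near fz zr eps (fz_continuous zr Hr) Heps) as [d0 [Hd0 Hnear]].
  exists (Rmin d0 (zr - m)). split; [apply Rmin_glb_lt; unfold m; lra |].
  intros z Hz. pose proof (Rmin_l d0 (zr - m)). pose proof (Rmin_r d0 (zr - m)).
  assert (Hz1 : 0 < z < 1) by (unfold m in *; lra).
  assert (HD : 0 < hden a b z) by (apply (hden_sign z Hz1); lra).
  assert (HDsmall : hden a b z * (Rabs M + 1) < A).
  { assert (Hf : fz z - fz zr < eps).
    { assert (Habs : Rabs (fz z - fz zr) < eps) by (apply Hnear; rewrite Rabs_left; lra).
      pose proof (Rle_abs (fz z - fz zr)). lra. }
    rewrite hden_as_difference.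
    replace A with (INR b * (INR b - 1) * eps * (Rabs M + 1)) by (unfold eps; field; lra).
    apply Rmult_lt_compat_r; [exact HM |].
    apply Rmult_lt_compat_l; [apply Rmult_lt_0_compat |]; lra. }
  assert (Hlarge : Rabs M + 1 < A / hden a b z).
  { apply Rlt_div_r; [exact HD |]. rewrite Rmult_comm. exact HDsmall. }
  assert (1 + A / hden a b z <= h a b z) by (apply h_lower_near_pole; unfold m in *; lra).
  pose proof (Rle_abs M). lra.
Qed.

End ShapeOfH.

Theorem lemma3 (a b : nat) (Ha : (3 <= a)%nat) (Hab : (a < b)%nat)
  (zl zr : R)
  (Hzl : 0 < zl < 1 /\ fz zl = 1 / (INR a - 1))
  (Hzr : 0 < zr < 1 /\ fz zr = 1 / (INR b - 1)) :
  ((forall z, 0 < z < 1 -> (hden a b z = 0 <-> z = zr)) /\ hnum a b zr <> 0) /\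
  (forall M, exists d, 0 < d /\ forall z, 0 < z < d -> h a b z < M) /\
  (forall M, exists d, 0 < d /\ forall z, zr - d < z < zr -> M < h a b z) /\
  (forall z, 0 < z <= zl -> h a b z <= 1) /\
  ((forall z, zl < z < zr -> 1 < h a b z) /\ h a b zl = 1) /\
  (forall z, zr < z < 1 -> h a b z < 1) /\
  (forall z, 0 < z < 1 -> z <> zr ->
     exists l, derivable_pt_lim (h a b) z l /\ (0 < l <-> 0 < g a b z)) /\
  (forall x y, 0 < x -> x < y -> y <= zl -> h a b x < h a b y) /\
  (forall x y, zr < x -> x < y -> y < 1 -> h a b x < h a b y) /\
  ((forall z, 0 < z < 1 -> 0 <= g a b z) ->
     forall x y, zl <= x -> x < y -> y < zr -> h a b x < h a b y) /\
  ((exists z, 0 < z < 1 /\ g a b z < 0) ->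
     forall z1 z2 : R,
       (0 < z1 < 1 /\ g a b z1 = 0 /\ forall z, 0 < z < 1 -> g a b z = 0 -> z1 <= z) ->
       (0 < z2 < 1 /\ g a b z2 = 0 /\ forall z, 0 < z < 1 -> g a b z = 0 -> z <= z2) ->
       zl < z1 < z2 /\ z2 < zr /\
       (forall x y, zl <= x -> x < y -> y <= z1 -> h a b x < h a b y) /\
       (forall x y, z1 <= x -> x < y -> y <= z2 -> h a b y < h a b x) /\
       (forall x y, z2 <= x -> x < y -> y < zr -> h a b x < h a b y)).
Proof.
  split; [exact (h_pole a b zl zr Ha Hab Hzl Hzr) |].
  split; [exact (h_tends_to_minus_infinity_at_zero a b zl zr Ha Hab Hzl Hzr) |].
  split; [exact (h_tends_to_plus_infinity_at_pole a b zl zr Ha Hab Hzl Hzr) |].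
  split; [exact (h_at_most_one_left a b zl zr Ha Hab Hzl Hzr) |].
  split; [exact (conj (h_between a b zl zr Ha Hab Hzl Hzr) (h_at_zl a b zl zr Ha Hab Hzl Hzr)) |].
  split; [exact (h_beyond_zr a b zl zr Ha Hab Hzl Hzr) |].
  split; [exact (h_derivative_sign a b zl zr Ha Hab Hzl Hzr) |].
  split; [exact (h_increasing_left a b zl zr Ha Hab Hzl Hzr) |].
  split; [exact (h_increasing_right a b zl zr Ha Hab Hzl Hzr) |].
  split; [exact (h_increasing_if_g_nonneg a b zl zr Ha Hab Hzl Hzr) |].
  exact (h_shape_if_g_negative a b zl zr Ha Hab Hzl Hzr).
Qed.
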